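(* Let $\varphi\colon[\mathbb{F}_2,\mathbb{F}_2]\to\mathbb{Z}$ be the homomorphism defined below and $G_1=\ker\varphi$. Suppose $g\in[\mathbb{F}_2,\mathbb{F}_2]$ satisfies $\varphi(g)=0$ and $g=ab$ with $a,b\in\mathbb{F}_2$ conjugate in $\mathbb{F}_2$. Then $a,b\in G_1$.
   Context: $\mathbb{F}_2$ is the free group on $x,y$. Let $\tilde K$ be the graph with vertex set $\mathbb{Z}^2$ and oriented edges $x^iy^jX$ from $(i,j)$ to $(i+1,j)$ and $x^iy^jY$ from $(i,j)$ to $(i,j+1)$ (the universal abelian cover of the wedge of two circles). A $1$-chain is written $\alpha=P_\alpha(x,y)X+Q_\alpha(x,y)Y$ with $P_\alpha,Q_\alpha$ integer Laurent polynomials (the coefficient of $x^iy^j$ in $P_\alpha$ is the coefficient of the edge $x^iy^jX$, similarly for $Q_\alpha$). For $g\in[\mathbb{F}_2,\mathbb{F}_2]$ written as a word in $x^{\pm1},y^{\pm1}$, the associated cycle $\alpha_g$ is the $1$-cycle traced by the lattice path starting at $(0,0)$ in which a letter $x$ (resp. $x^{-1}$, $y$, $y^{-1}$) moves by $(1,0)$ (resp. $(-1,0)$, $(0,1)$, $(0,-1)$) along the corresponding edge, each edge counted with sign $+1$ if traversed in its orientation and $-1$ otherwise; its homology class depends only on $g$. Let $f_\alpha(y)=P_\alpha(1,y)$. Define $\varphi(g)=f_{\alpha_g}'(1)$; this is a homomorphism $[\mathbb{F}_2,\mathbb{F}_2]\to\mathbb{Z}$. *)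

From mathcomp Require Import all_boot all_order all_algebra.
Set Implicit Arguments. Unset Strict Implicit. Unset Printing Implicit Defensive.
Import Order.TTheory GRing.Theory Num.Theory.
Local Open Scope ring_scope.

(* a letter is (is_y, is_inverse): x = (false,false), x^-1 = (false,true),
   y = (true,false), y^-1 = (true,true). *)
Definition letter := (bool * bool)%type.
Definition inv_letter (l : letter) : letter := (l.1, ~~ l.2).

Fixpoint reducedb (w : seq letter) : bool :=
  match w with
  | a :: ((b :: _) as t) => (b != inv_letter a) && reducedb t
  | _ => true
  end.

Definition push (l : letter) (s : seq letter) : seq letter :=
  if s is l' :: s' then (if l' == inv_letter l then s' else l :: s) else [:: l].
Definition reduce (w : seq letter) : seq letter := foldr push [::] w.

Lemma reducedb_tail a s : reducedb (a :: s) -> reducedb s.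
Proof. by case: s => [//|b t] /= /andP[]. Qed.

Lemma reducedb_push l s : reducedb s -> reducedb (push l s).
Proof.
case: s => [//|l' s'] /= Hs.
case: ifP => [_|/negbT Hne]; first exact: reducedb_tail Hs.
by rewrite /= Hne.
Qed.

Lemma reducedb_reduce w : reducedb (reduce w).
Proof. by elim: w => [//|l w IH] /=; apply: reducedb_push. Qed.

Definition F2 := {w : seq letter | reducedb w}.
Definition F2_of_word (w : seq letter) : F2 := exist _ (reduce w) (reducedb_reduce w).

Definition f2one : F2 := F2_of_word [::].
Definition f2mul (a b : F2) : F2 := F2_of_word (proj1_sig a ++ proj1_sig b).
Definition f2inv (a : F2) : F2 := F2_of_word (rev (map inv_letter (proj1_sig a))).
Definition f2x : F2 := F2_of_word [:: (false, false)].
Definition f2y : F2 := F2_of_word [:: (true, false)].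

Definition f2comm (u v : F2) : F2 := f2mul (f2mul u v) (f2mul (f2inv u) (f2inv v)).

Inductive in_commutator_subgroup : F2 -> Prop :=
  | cs_one : in_commutator_subgroup f2one
  | cs_comm u v : in_commutator_subgroup (f2comm u v)
  | cs_mul g h : in_commutator_subgroup g -> in_commutator_subgroup h ->
                 in_commutator_subgroup (f2mul g h)
  | cs_inv g : in_commutator_subgroup g -> in_commutator_subgroup (f2inv g).

Definition conjugate (a b : F2) : Prop := exists c : F2, b = f2mul (f2mul c a) (f2inv c).

(* An oriented edge: (is_Y_edge, base vertex (i,j)); x^i y^j X goes (i,j)->(i+1,j),
   x^i y^j Y goes (i,j)->(i,j+1). *)
Definition edge := (bool * (int * int))%type.

Fixpoint path_edges (p : int * int) (w : seq letter) : seq (edge * int) :=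
  match w with
  | [::] => [::]
  | l :: w' =>
    let (i, j) := p in
    match l with
    | (false, false) => ((false, (i, j)), 1) :: path_edges (i + 1, j) w'
    | (false, true)  => ((false, (i - 1, j)), -1) :: path_edges (i - 1, j) w'
    | (true, false)  => ((true, (i, j)), 1) :: path_edges (i, j + 1) w'
    | (true, true)   => ((true, (i, j - 1)), -1) :: path_edges (i, j - 1) w'
    end
  end.

(* the 1-chain alpha_g = P X + Q Y: coefficient of each edge *)
Definition chain_coef (w : seq letter) (e : edge) : int :=
  \sum_(s <- path_edges (0, 0) w | s.1 == e) s.2.

(* f_alpha(y) = P_alpha(1,y) = sum_{i,j} P_{ij} y^j, hence
   f_alpha'(1) = sum_{i,j} j * P_{ij} = sum over X-edges e=(i,j) in the
   (finite) support of the chain of  j * coefficient(e). *)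
Definition phi (g : F2) : int :=
  let w := proj1_sig g in
  \sum_(e <- undup [seq s.1 | s <- path_edges (0, 0) w] | ~~ e.1)
     e.2.2 * chain_coef w e.

Definition in_G1 (g : F2) : Prop := in_commutator_subgroup g /\ phi g = 0.

From HB Require Import structures.
From mathcomp Require Import all_boot all_algebra ring zify.
Set Implicit Arguments. Unset Strict Implicit. Unset Printing Implicit Defensive.
Import GRing.Theory.
Local Open Scope ring_scope.

(* Write e_x = abel false and e_y = abel true for the exponent sums, the
   coordinates of the abelianization F2 -> Z^2.  On the free group phi is a
   1-cocycle twisted by the abelianization:
   phi (g h) = phi g + phi h + e_y g * e_x h.  Hence phi is invariant under
   conjugation on elements with trivial abelian image.  If a (c a c^-1) lies in
   [F2, F2] then 2 e(a) = 0, so a has trivial abelian image and therefore lies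
   in [F2, F2] (every word w equals x^(e_x w) y^(e_y w) modulo [F2, F2]), and
   0 = phi (a (c a c^-1)) = 2 phi a. *)

Section IntPower.
Local Open Scope group_scope.
Variable G : groupType.

Definition expgz (x : G) (m : int) : G :=
  match m with Posz n => x ^+ n | Negz n => (x ^+ n.+1)^-1 end.

Lemma expgz1D x m : expgz x (1 + m) = x * expgz x m.
Proof.
case: m => [n|[|n]]; first by rewrite /= add1n expgS.
  by rewrite /= mulgV.
have -> : (1 + Negz n.+1 = Negz n)%R by lia.
by rewrite /= [x ^+ n.+2]expgSr invgM mulVKg.
Qed.

Lemma expgzN1D x m : expgz x (-1 + m) = x^-1 * expgz x m.
Proof.
have {2}-> : m = (1 + (-1 + m))%R by lia.
by rewrite expgz1D mulKg.
Qed.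

End IntPower.

Lemma big_undup_collect (T : eqType) (R : pzSemiRingType) (L : seq (T * R))
    (P : pred T) (f : T -> R) :
  \sum_(e <- undup [seq s.1 | s <- L] | P e) f e * \sum_(s <- L | s.1 == e) s.2
  = \sum_(s <- L | P s.1) f s.1 * s.2.
Proof.
under eq_bigr do rewrite big_distrr.
rewrite (exchange_big_dep (fun s => P s.1)) /=; last by move=> e s Pe /eqP->.
rewrite big_seq_cond [RHS]big_seq_cond; apply: eq_bigr => s /andP[Ls Ps].
rewrite (eq_bigl (pred1 s.1)) => [|e]; last first.
  by rewrite /= eq_sym; case: eqP => [->|]; rewrite ?Ps ?andbF.
rewrite -big_filter filter_pred1_uniq ?undup_uniq ?big_seq1 //.
by rewrite mem_undup map_f.
Qed.

Lemma inv_letterK : involutive inv_letter.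
Proof. by case=> a b; rewrite /inv_letter /= negbK. Qed.

Lemma reduce_reduced w : reducedb w -> reduce w = w.
Proof.
elim: w => [//|l w IHw] rw /=; rewrite IHw ?(reducedb_tail rw) //.
by case: w rw {IHw} => [//|l' w] /= /andP[/negbTE->].
Qed.

Lemma push_cancel l s : reducedb s -> push l (push (inv_letter l) s) = s.
Proof.
case: s => [|l' s] /=; first by rewrite eqxx.
rewrite inv_letterK; case: eqP => [->|_] rs /=; last by rewrite eqxx.
by case: s rs => [//|l'' s] /= /andP[/negbTE->].
Qed.

Lemma reduce_cancel p l q :
  reduce (p ++ l :: inv_letter l :: q) = reduce (p ++ q).
Proof. by rewrite /reduce !foldr_cat /= push_cancel ?reducedb_reduce. Qed.

Lemma reduce_invariant T (F : seq letter -> T) :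
  (forall p l q, F (p ++ l :: inv_letter l :: q) = F (p ++ q)) ->
  forall w, F (reduce w) = F w.
Proof.
move=> Fcancel w; rewrite -[reduce w]cat0s -[w in RHS]cat0s.
elim: w [::] => [//|l w IHw] p /=.
have -> : F (p ++ push l (reduce w)) = F (p ++ l :: reduce w).
  case: (reduce w) => [//|l' s] /=; case: eqP => [->|//].
  by rewrite Fcancel.
by rewrite -cat_rcons IHw cat_rcons.
Qed.

Lemma reduce_catl u v : reduce (reduce u ++ v) = reduce (u ++ v).
Proof.
apply: (@reduce_invariant _ (fun u => reduce (u ++ v))) => p l q.
by rewrite -!catA reduce_cancel.
Qed.

Lemma reduce_catr u v : reduce (u ++ reduce v) = reduce (u ++ v).
Proof.
elim: u => [|l u IHu]; first by rewrite reduce_reduced ?reducedb_reduce.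
by rewrite /= IHu.
Qed.

Definition inv_word (w : seq letter) := rev (map inv_letter w).

Lemma inv_wordK : involutive inv_word.
Proof.
by move=> w; rewrite /inv_word map_rev revK -map_comp (eq_map inv_letterK) map_id.
Qed.

Lemma reduce_inv_word_cat w : reduce (inv_word w ++ w) = [::].
Proof.
elim: w => [//|l w IHw].
rewrite -[RHS]IHw -(reduce_cancel (inv_word w) (inv_letter l)) inv_letterK.
by rewrite /inv_word /= rev_cons -cats1 -catA.
Qed.

Lemma F2_of_word_val (a : F2) : F2_of_word (val a) = a.
Proof. by apply: val_inj; rewrite /= reduce_reduced //; case: a. Qed.

Lemma f2mulA : associative f2mul.
Proof.
by move=> a b c; apply: val_inj; rewrite /= reduce_catl reduce_catr catA.
Qed.

Lemma f2mul1g : left_id f2one f2mul.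
Proof. exact: F2_of_word_val. Qed.
Lemma f2mulg1 : right_id f2one f2mul.
Proof. by move=> a; rewrite /f2mul /= cats0 F2_of_word_val. Qed.
Lemma f2mulVg : left_inverse f2one f2inv f2mul.
Proof.
by move=> a; apply: val_inj; rewrite /= reduce_catl reduce_inv_word_cat.
Qed.
Lemma f2mulgV : right_inverse f2one f2inv f2mul.
Proof.
move=> a; apply: val_inj; rewrite /= reduce_catr -{1}[val a]inv_wordK.
exact: reduce_inv_word_cat.
Qed.

HB.instance Definition _ := Choice.copy F2 {w : seq letter | reducedb w}.
HB.instance Definition _ :=
  isGroup.Build F2 f2mulA f2mul1g f2mulg1 f2mulVg f2mulgV.

Section FreeGroup.
Local Open Scope group_scope.

Lemma f2mulE : f2mul = *%g. Proof. by []. Qed.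
Lemma f2invE : f2inv = (fun a => a^-1). Proof. by []. Qed.
Lemma f2commE u v : f2comm u v = u * v * (u^-1 * v^-1). Proof. by []. Qed.

Lemma F2_of_word_cat u v :
  F2_of_word (u ++ v) = F2_of_word u * F2_of_word v.
Proof. by apply: val_inj; rewrite /= reduce_catl reduce_catr. Qed.

Definition gen (t : bool) : F2 := F2_of_word [:: (t, false)].

Lemma F2_of_letter t (s : bool) :
  F2_of_word [:: (t, s)] = if s then (gen t)^-1 else gen t.
Proof. by case: s; apply: val_inj. Qed.

End FreeGroup.

Definition expo (t : bool) (l : letter) : int :=
  if l.1 == t then (-1) ^+ l.2 else 0.
Definition expsum (t : bool) (w : seq letter) : int := \sum_(l <- w) expo t l.

Lemma expo_inv t l : expo t (inv_letter l) = - expo t l.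
Proof.
by case: l => a [] /=; rewrite /expo /=; case: (a == t); rewrite ?oppr0 ?opprK.
Qed.

Lemma expsum_cons t l w : expsum t (l :: w) = expo t l + expsum t w.
Proof. exact: big_cons. Qed.

Lemma expsum_cat t u v : expsum t (u ++ v) = expsum t u + expsum t v.
Proof. exact: big_cat. Qed.

Lemma expsum_inv_word t w : expsum t (inv_word w) = - expsum t w.
Proof.
by rewrite /expsum big_rev big_map -sumrN; under eq_bigr do rewrite expo_inv.
Qed.

Lemma expsum_reduce t w : expsum t (reduce w) = expsum t w.
Proof.
apply: (@reduce_invariant _ (expsum t)) => p l q.
by rewrite !expsum_cat !expsum_cons expo_inv addNKr.
Qed.

Definition abel (t : bool) (g : F2) : int := expsum t (val g).

Lemma abelM t g h : abel t (g * h)%g = abel t g + abel t h.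
Proof. by rewrite /abel /= expsum_reduce expsum_cat. Qed.

Lemma abelV t g : abel t g^-1%g = - abel t g.
Proof. by rewrite /abel /= expsum_reduce expsum_inv_word. Qed.

Lemma abel_conj t c a : abel t (c * a * c^-1)%g = abel t a.
Proof. by rewrite !abelM abelV addrAC subrr add0r. Qed.

Section CommutatorSubgroup.
Local Open Scope group_scope.

Lemma commutator_subgroup_conj c k :
  in_commutator_subgroup k -> in_commutator_subgroup (c * k * c^-1).
Proof.
move=> Kk; have := cs_mul (cs_comm c k) Kk.
by rewrite f2commE f2mulE mulgA mulgVK.
Qed.

Lemma abel_commutator_subgroup t g :
  in_commutator_subgroup g -> abel t g = 0%R.
Proof.
elim=> [|u v|{}g h _ Hg _ Hh|{}g _ Hg]; rewrite ?f2commE ?f2mulE ?f2invE.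
- by rewrite /abel /expsum big_nil.
- by rewrite !abelM !abelV addrACA !subrr.
- by rewrite abelM Hg Hh addr0.
- by rewrite abelV Hg oppr0.
Qed.

Definition monomial (a b : int) : F2 :=
  expgz (gen false) a * expgz (gen true) b.

Lemma expgz_gen_expoD t l m :
  expgz (gen t) (expo t l + m) =
  (if l.1 == t then F2_of_word [:: l] else 1) * expgz (gen t) m.
Proof.
case: l => t' s; rewrite /expo /= F2_of_letter.
case: eqP => [->|_]; last by rewrite add0r mul1g.
by case: s; rewrite ?expgz1D ?expgzN1D.
Qed.

Lemma commutator_subgroup_word w :
  in_commutator_subgroup
    (F2_of_word w * (monomial (expsum false w) (expsum true w))^-1).
Proof.
elim: w => [|l w IHw].
  by rewrite /expsum !big_nil; apply: cs_one.
rewrite -cat1s F2_of_word_cat /monomial !expsum_cons !expgz_gen_expoD.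
have := commutator_subgroup_conj (F2_of_word [:: l]) IHw.
case: l => [[] s] /=; rewrite mul1g; set L := F2_of_word _;
  set W := F2_of_word w; set X := expgz (gen false) _;
  set Y := expgz (gen true) _ => KW.
- have -> : L * W * (X * (L * Y))^-1 =
            L * (W * (X * Y)^-1) * L^-1 * f2comm L X.
    by rewrite f2commE !invgM !mulgA mulgVK mulgVK.
  exact: cs_mul KW (cs_comm _ _).
- by rewrite -(mulgA L X Y) invgM !mulgA; rewrite mulgA in KW.
Qed.

Lemma commutator_subgroup_abel g :
  abel false g = 0%R -> abel true g = 0%R -> in_commutator_subgroup g.
Proof.
rewrite /abel => ax ay; have := commutator_subgroup_word (val g).
by rewrite ax ay /monomial /= !expg0 mul1g invg1 mulg1 F2_of_word_val.
Qed.

End CommutatorSubgroup.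

Definition path_phi (p : int * int) (w : seq letter) : int :=
  \sum_(s <- path_edges p w | ~~ s.1.1) s.1.2.2 * s.2.

Lemma path_phi_nil p : path_phi p [::] = 0.
Proof. by case: p => i j; rewrite /path_phi big_nil. Qed.

Lemma path_phi_cons i j l w :
  path_phi (i, j) (l :: w) =
  j * expo false l + path_phi (i + expo false l, j + expo true l) w.
Proof.
case: l => [[] []]; rewrite /path_phi /expo /= big_cons /=;
  by rewrite ?expr0 ?expr1 ?addr0 ?mulr0 ?add0r.
Qed.

Lemma path_phi_shift i j w :
  path_phi (i, j) w = path_phi (0, 0) w + j * expsum false w.
Proof.
elim: w i j => [|l w IHw] i j.
  by rewrite !path_phi_nil /expsum big_nil mulr0 addr0.
by rewrite !path_phi_cons IHw [path_phi (0 + _, _) _]IHw expsum_cons; ring.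
Qed.

Lemma path_phi_cat i j u v :
  path_phi (i, j) (u ++ v) =
  path_phi (i, j) u + path_phi (0, 0) v + (j + expsum true u) * expsum false v.
Proof.
elim: u i j => [|l u IHu] i j /=.
  by rewrite path_phi_nil path_phi_shift /expsum big_nil addr0 add0r.
by rewrite !path_phi_cons IHu expsum_cons; ring.
Qed.

Definition word_phi (w : seq letter) : int := path_phi (0, 0) w.

Lemma word_phi_cat u v :
  word_phi (u ++ v) = word_phi u + word_phi v + expsum true u * expsum false v.
Proof. by rewrite /word_phi path_phi_cat add0r. Qed.

Lemma word_phi_reduce w : word_phi (reduce w) = word_phi w.
Proof.
apply: (@reduce_invariant _ word_phi) => p l q.
have phi0 : word_phi [:: l; inv_letter l] = 0.
  case: l => [[] []];
  by rewrite /word_phi !path_phi_cons path_phi_nil /expo /=; ring.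
have cancel0 t : expsum t [:: l; inv_letter l] = 0.
  by rewrite !expsum_cons expo_inv /expsum big_nil addr0 subrr.
rewrite -[l :: _ :: q]/([:: l; inv_letter l] ++ q) !word_phi_cat expsum_cat.
by rewrite !cancel0 phi0 mul0r addr0 add0r add0r.
Qed.

Lemma phi_val g : phi g = word_phi (val g).
Proof. exact: big_undup_collect. Qed.

Section Phi.
Local Open Scope group_scope.

Lemma phiM g h : phi (g * h) = (phi g + phi h + abel true g * abel false h)%R.
Proof. by rewrite !phi_val /= word_phi_reduce word_phi_cat. Qed.

Lemma phi1 : phi 1 = 0%R.
Proof. by rewrite phi_val /word_phi path_phi_nil. Qed.

Lemma phi_conj c a :
  phi (c * a * c^-1) =
  (phi a + abel true c * abel false a - abel true a * abel false c)%R.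
Proof.
have := phiM c c^-1; rewrite mulgV phi1 abelV => phic.
rewrite !phiM !abelM abelV -[RHS]add0r phic; ring.
Qed.

End Phi.

Theorem lemma3p1 (g a b : F2) :
  in_commutator_subgroup g -> phi g = 0%R ->
  g = f2mul a b -> conjugate a b ->
  in_G1 a /\ in_G1 b.
Proof.
move=> Kg phig gE [c bE]; subst g b.
rewrite !f2mulE f2invE /= in Kg phig *.
have abel_a t : abel t a = 0%R.
  by have := abel_commutator_subgroup t Kg; rewrite abelM abel_conj; lia.
have phi_b : phi (c * a * c^-1)%g = phi a.
  by rewrite phi_conj !abel_a mulr0 mul0r subr0 addr0.
have phi_a : phi a = 0%R.
  by move: phig; rewrite phiM phi_b abel_a mul0r addr0; lia.
have Ka := commutator_subgroup_abel (abel_a false) (abel_a true).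
split; split=> //; last by rewrite phi_b.
exact: commutator_subgroup_conj.
Qed.
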